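(* Let $n,m$ be positive integers, $\Lambda:\mathbb{R}^{n\times n}\to\mathbb{R}^{m\times m}$ linear and $Y\in\mathbb{R}^{m\times m}$. For a real parameter $k\ge1$, call a triple $(\Phi_I,\Phi_V,\Phi_\phi)$ of real symmetric operators on $\mathcal{H}_{A_1}\otimes\mathcal{H}_{B_1}=\mathbb{R}^n\otimes\mathbb{R}^n$ $k$-feasible if \[ \Phi_V=V\Phi_I,\quad \Phi_\phi=\Phi_V^{T_{A_1}},\quad \Phi_I^{T_{A_1}}=\Phi_I,\quad V\Phi_\phi=\Phi_\phi,\quad \Phi_I+\Phi_V\ge0,\quad \Phi_I-\Phi_V\ge0,\quad \Phi_I+\Phi_V+k\Phi_\phi\ge0, \] \[ k^2\operatorname{Tr}(\Phi_I)+k\operatorname{Tr}(\Phi_V)+k\operatorname{Tr}(\Phi_\phi)=1,\qquad (\Lambda_{A_1}\otimes\mathrm{id}_{B_1})(k\Phi_I+\Phi_V+\Phi_\phi)=Y\otimes\operatorname{Tr}_{A_1}(k\Phi_I+\Phi_V+\Phi_\phi). \] If $(\Phi_I,\Phi_V,\Phi_\phi)$ is $k$-feasible with $k\ge1$, then for every real $k'\ge k$ there is a $k'$-feasible triple $(\Phi_I',\Phi_V',\Phi_\phi')$ with $k'^2\Phi_I'+k'\Phi_V'+k'\Phi_\phi'=k^2\Phi_I+k\Phi_V+k\Phi_\phi$.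
   Context: $V$ is the swap operator on $\mathbb{R}^n\otimes\mathbb{R}^n$; $T_{A_1}$ denotes the partial transpose on the first factor; $\operatorname{Tr}_{A_1}$ is the partial trace over the first factor; $\Lambda_{A_1}\otimes\mathrm{id}_{B_1}$ applies $\Lambda$ to the first factor; $\ge0$ means positive semidefinite. (This is the symmetry-reduced second level of the real hierarchy, in which the rank bound $k$ appears as a parameter.) *)

From HB Require Import structures.
From mathcomp Require Import all_boot all_order all_algebra.
From mathcomp Require Import reals.
Set Implicit Arguments. Unset Strict Implicit. Unset Printing Implicit Defensive.
Import Order.TTheory GRing.Theory Num.Theory.
Local Open Scope ring_scope.

(* Operators on R^p (x) R^q are matrices 'M_(p*q); the product basis vector
   e_a (x) e_b has index [mxvec_index a b] (MathComp's standard encoding). *)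

(* inverse of mxvec_index : decode a product index into a pair *)
Definition idx_pair (p q : nat) (k : 'I_(p * q)) : 'I_p * 'I_q :=
  enum_val (cast_ord (esym (mxvec_cast p q)) k).

Section Tensor.
Variable R : realType.

(* swap operator V on R^n (x) R^n : V (e_a (x) e_b) = e_b (x) e_a *)
Definition swapV (n : nat) : 'M[R]_(n * n) :=
  \matrix_(k, l) (((idx_pair k).1 == (idx_pair l).2)
                  && ((idx_pair k).2 == (idx_pair l).1))%:R.

(* partial transpose on the first factor:
   <a b| X^{T_A} |a' b'> = <a' b| X |a b'> *)
Definition ptA (n : nat) (X : 'M[R]_(n * n)) : 'M[R]_(n * n) :=
  \matrix_(k, l) X (mxvec_index (idx_pair l).1 (idx_pair k).2)
                   (mxvec_index (idx_pair k).1 (idx_pair l).2).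

Definition ptrA (n : nat) (X : 'M[R]_(n * n)) : 'M[R]_n :=
  \matrix_(b, b') \sum_(a < n) X (mxvec_index a b) (mxvec_index a b').

(* (L_{A} (x) id_{B}) X for a map L : M_n -> M_m acting on the first factor *)
Definition applyA (n m : nat) (L : 'M[R]_n -> 'M[R]_m) (X : 'M[R]_(n * n))
  : 'M[R]_(m * n) :=
  \matrix_(k, l)
    L (\matrix_(a, a') X (mxvec_index a (idx_pair k).2)
                         (mxvec_index a' (idx_pair l).2))
      (idx_pair k).1 (idx_pair l).1.

Definition kron (p q : nat) (Y : 'M[R]_p) (T : 'M[R]_q) : 'M[R]_(p * q) :=
  \matrix_(k, l) (Y (idx_pair k).1 (idx_pair l).1 * T (idx_pair k).2 (idx_pair l).2).

Definition psd (p : nat) (A : 'M[R]_p) : Prop :=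
  A^T = A /\ forall v : 'cV[R]_p, 0 <= (v^T *m A *m v) 0 0.

Definition kfeasible (n m : nat) (L : {linear 'M[R]_n -> 'M[R]_m}) (Y : 'M[R]_m)
  (k : R) (PI PV Pphi : 'M[R]_(n * n)) : Prop :=
  [/\ PI^T = PI, PV^T = PV & Pphi^T = Pphi] /\
  [/\ PV = swapV n *m PI, Pphi = ptA PV, ptA PI = PI & swapV n *m Pphi = Pphi] /\
  [/\ psd (PI + PV), psd (PI - PV), psd (PI + PV + k *: Pphi),
       k ^+ 2 * \tr PI + k * \tr PV + k * \tr Pphi = 1 &
       applyA L (k *: PI + PV + Pphi) = kron Y (ptrA (k *: PI + PV + Pphi))].

End Tensor.

From HB Require Import structures.
From mathcomp Require Import all_boot all_order all_algebra.
From mathcomp Require Import reals.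
From mathcomp Require Import ring lra.
Import Order.TTheory GRing.Theory Num.Theory.
Set Implicit Arguments.
Unset Strict Implicit.
Unset Printing Implicit Defensive.

Local Open Scope ring_scope.

(* V swaps Phi_I and Phi_V and fixes Phi_phi, while T_{A_1} swaps Phi_V and
   Phi_phi and fixes Phi_I.  Mixing each operator with the sum of the other
   two, Phi_X' = al Phi_X + be (Phi_Y + Phi_Z), therefore preserves the linear
   symmetry constraints, and for al >= be >= 0 (and k >= 1) the positivity
   constraints of the new triple are nonnegative combinations of the old ones.
   The weights are chosen so that k' Phi_I' + Phi_V' + Phi_phi' equals
   (k / k') (k Phi_I + Phi_V + Phi_phi); the trace and channel constraints
   only involve this combination, and multiplying it by k' gives the required
   identity. *)

Lemma idx_pairK p q (a : 'I_p) (b : 'I_q) : idx_pair (mxvec_index a b) = (a, b).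
Proof. by rewrite /idx_pair /mxvec_index cast_ordK enum_rankK. Qed.

Lemma mxvec_index_pair p q (k : 'I_(p * q)) :
  mxvec_index (idx_pair k).1 (idx_pair k).2 = k.
Proof. by case/mxvec_indexP: k => a b; rewrite idx_pairK. Qed.

Section PartialOperations.
Variable R : realType.

Lemma swapV_mulmxE n p (X : 'M[R]_(n * n, p)) k l :
  (swapV R n *m X) k l = X (mxvec_index (idx_pair k).2 (idx_pair k).1) l.
Proof.
rewrite mxE (bigD1 (mxvec_index (idx_pair k).2 (idx_pair k).1)) //= big1.
  by rewrite mxE idx_pairK !eqxx mul1r addr0.
move=> j neq_j; rewrite mxE.
case: eqP => [E1|]; case: eqP => [E2|] //=; rewrite ?mul0r //.
by move: neq_j; rewrite E1 E2 mxvec_index_pair eqxx.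
Qed.

Lemma swapV_mulmxK n p (X : 'M[R]_(n * n, p)) : swapV R n *m (swapV R n *m X) = X.
Proof.
by apply/matrixP => k l; rewrite !swapV_mulmxE idx_pairK mxvec_index_pair.
Qed.

Lemma ptAK n : involutive (@ptA R n).
Proof.
by move=> X; apply/matrixP => k l; rewrite !mxE !idx_pairK !mxvec_index_pair.
Qed.

Fact ptA_is_linear n : linear (@ptA R n).
Proof. by move=> a X Y; apply/matrixP => k l; rewrite !mxE. Qed.

HB.instance Definition _ n :=
  GRing.isLinear.Build R _ _ _ (@ptA R n) (@ptA_is_linear n).

Fact ptrA_is_linear n : linear (@ptrA R n).
Proof.
move=> a X Y; apply/matrixP => b b'; rewrite !mxE mulr_sumr -big_split /=.
by apply: eq_bigr => i _; rewrite !mxE.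
Qed.

HB.instance Definition _ n :=
  GRing.isLinear.Build R _ _ _ (@ptrA R n) (@ptrA_is_linear n).

Fact kron_is_linear p q (Y : 'M[R]_p) : linear (@kron R p q Y).
Proof. by move=> a S T; apply/matrixP => k l; rewrite !mxE mulrDr mulrCA. Qed.

HB.instance Definition _ p q (Y : 'M[R]_p) :=
  GRing.isLinear.Build R _ _ _ (@kron R p q Y) (@kron_is_linear p q Y).

Fact applyA_is_linear n m (L : {linear 'M[R]_n -> 'M[R]_m}) : linear (applyA L).
Proof.
move=> c X Y; apply/matrixP => k l; rewrite !mxE.
pose block (Z : 'M[R]_(n * n)) : 'M[R]_n :=
  \matrix_(a, a') Z (mxvec_index a (idx_pair k).2) (mxvec_index a' (idx_pair l).2).
have blockP : block (c *: X + Y) = c *: block X + block Y.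
  by apply/matrixP => a a'; rewrite !mxE.
by rewrite -!/(block _) blockP linearP !mxE.
Qed.

HB.instance Definition _ n m (L : {linear 'M[R]_n -> 'M[R]_m}) :=
  GRing.isLinear.Build R _ _ _ (applyA L) (@applyA_is_linear n m L).

End PartialOperations.

Section PositiveSemidefinite.
Variable R : realType.

Lemma psdD p (A B : 'M[R]_p) : psd A -> psd B -> psd (A + B).
Proof.
move=> [symA posA] [symB posB]; split; first by rewrite linearD /= symA symB.
by move=> v; rewrite mulmxDr mulmxDl mxE addr_ge0.
Qed.

Lemma psdZ p (c : R) (A : 'M[R]_p) : 0 <= c -> psd A -> psd (c *: A).
Proof.
move=> c_ge0 [symA posA]; split; first by rewrite linearZ /= symA.
by move=> v; rewrite -scalemxAr -scalemxAl mxE mulr_ge0.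
Qed.

Lemma psd_combination p (c x y : R) (A B : 'M[R]_p) :
  0 < c -> 0 <= y -> y / c <= x -> psd A -> psd (A + c *: B) ->
  psd (x *: A + y *: B).
Proof.
move=> c_gt0 y_ge0 le_x psdA psdAB.
have -> : x *: A + y *: B = (x - y / c) *: A + (y / c) *: (A + c *: B).
  by rewrite scalerDr scalerA divfK ?gt_eqF // addrA scalerBl subrK.
apply: psdD; apply: psdZ => //.
  by rewrite subr_ge0.
by rewrite divr_ge0 // ltW.
Qed.

End PositiveSemidefinite.

Section Mixing.
Variables (R : comPzRingType) (p : nat) (al be : R).
Implicit Types (X Y Z : 'M[R]_p) (t : R).

Definition mix3 X Y Z : 'M[R]_p := al *: X + be *: (Y + Z).

Lemma trmx_mix3 X Y Z : (mix3 X Y Z)^T = mix3 X^T Y^T Z^T.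
Proof. by apply/matrixP => i j; rewrite !mxE. Qed.

Lemma mix3_sum_scaled_first t X Y Z :
  t *: mix3 X Y Z + mix3 Y X Z + mix3 Z X Y =
  (t * al + 2 * be) *: X + (al + (t + 1) * be) *: (Y + Z).
Proof. by apply/matrixP => i j; rewrite !mxE; ring. Qed.

Lemma mix3_sum_scaled_last t X Y Z :
  mix3 X Y Z + mix3 Y X Z + t *: mix3 Z X Y =
  (al + (t + 1) * be) *: (X + Y) + (t * al + 2 * be) *: Z.
Proof. by apply/matrixP => i j; rewrite !mxE; ring. Qed.

Lemma mix3D X Y Z : mix3 X Y Z + mix3 Y X Z = (al + be) *: (X + Y) + (2 * be) *: Z.
Proof. by apply/matrixP => i j; rewrite !mxE; ring. Qed.

Lemma mix3B X Y Z : mix3 X Y Z - mix3 Y X Z = (al - be) *: (X - Y).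
Proof. by apply/matrixP => i j; rewrite !mxE; ring. Qed.

End Mixing.

Section Symmetries.
Variables (R : realType) (n : nat).

Definition triple_symmetries (PI PV Pphi : 'M[R]_(n * n)) : Prop :=
  [/\ PV = swapV R n *m PI, Pphi = ptA PV, ptA PI = PI & swapV R n *m Pphi = Pphi].

Lemma mix3_symmetries (al be : R) (PI PV Pphi : 'M[R]_(n * n)) :
  triple_symmetries PI PV Pphi ->
  triple_symmetries (mix3 al be PI PV Pphi) (mix3 al be PV PI Pphi)
                    (mix3 al be Pphi PI PV).
Proof.
move=> [defPV defPphi ptA_PI swapV_Pphi].
have swapV_PV : swapV R n *m PV = PI by rewrite defPV swapV_mulmxK.
have ptA_Pphi : ptA Pphi = PV by rewrite defPphi ptAK.
rewrite /mix3; split; rewrite !linearD !linearZ /= ?linearD /=;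
  by rewrite -?defPV -?defPphi ?swapV_PV ?swapV_Pphi ?ptA_PI ?ptA_Pphi //
            [be *: _ + _]addrC.
Qed.

End Symmetries.

Definition lift_coefficients (R : realFieldType) (k k' al be : R) : Prop :=
  [/\ k' * al + 2 * be = k ^+ 2 / k', al + (k' + 1) * be = k / k' & 0 <= be <= al].

Lemma lift_coefficients_exist (R : realFieldType) (k k' : R) :
  1 <= k -> k <= k' -> exists al be, lift_coefficients k k' al be.
Proof.
move=> k_ge1 le_kk'.
have k_neq0 : k != 0 by rewrite gt_eqF //; lra.
have [->|ne_k'k] := eqVneq k' k.
  exists 1, 0; split; rewrite ?lexx ?ler01 // ?mulr0 ?addr0 ?mulr1.
    by rewrite expr2 mulfK.
  by rewrite divff.
have lt_kk' : k < k' by rewrite lt_neqAle eq_sym ne_k'k.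
have k'_neq0 : k' != 0 by rewrite gt_eqF //; lra.
have k'B1_neq0 : k' - 1 != 0 by rewrite gt_eqF //; lra.
have k'D2_neq0 : k' + 2 != 0 by rewrite gt_eqF //; lra.
(* Cramer's rule for the two equations; the determinant is k'(k'+1) - 2. *)
pose c := k / (k' * ((k' - 1) * (k' + 2))).
have c_gt0 : 0 < c by rewrite divr_gt0 ?mulr_gt0 //; lra.
exists (c * (k * (k' + 1) - 2)), (c * (k' - k)); split.
- by rewrite /c; field; rewrite k'_neq0 k'B1_neq0 k'D2_neq0.
- by rewrite /c; field; rewrite k'_neq0 k'B1_neq0 k'D2_neq0.
- apply/andP; split; first by apply: mulr_ge0; [exact: ltW | rewrite subr_ge0 ltW].
  by rewrite ler_pM2l //; nra.
Qed.

Section Lifting.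
Variables (R : realType) (n m : nat) (L : {linear 'M[R]_n -> 'M[R]_m}) (Y : 'M[R]_m).
Variables (k k' al be : R) (PI PV Pphi : 'M[R]_(n * n)).
Hypotheses (k_ge1 : 1 <= k) (le_kk' : k <= k') (coefs : lift_coefficients k k' al be).

Let k_gt0 : 0 < k. Proof. exact: lt_le_trans ltr01 k_ge1. Qed.
Let k'_gt0 : 0 < k'. Proof. exact: lt_le_trans k_gt0 le_kk'. Qed.

Let PI' := mix3 al be PI PV Pphi.
Let PV' := mix3 al be PV PI Pphi.
Let Pphi' := mix3 al be Pphi PI PV.

Lemma lift_weighted_sum : k' *: PI' + PV' + Pphi' = (k / k') *: (k *: PI + PV + Pphi).
Proof.
case: coefs => coefI coefVphi _.
rewrite mix3_sum_scaled_first coefI coefVphi.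
by apply/matrixP => i j; rewrite !mxE; ring.
Qed.

Lemma lift_scaled_sum :
  k' ^+ 2 *: PI' + k' *: PV' + k' *: Pphi' = k ^+ 2 *: PI + k *: PV + k *: Pphi.
Proof.
rewrite expr2 -scalerA -!scalerDr lift_weighted_sum scalerA mulrCA.
rewrite divff ?mulr1 ?gt_eqF //.
by rewrite !scalerDr scalerA.
Qed.

Lemma kfeasible_lift :
  kfeasible L Y k PI PV Pphi -> kfeasible L Y k' PI' PV' Pphi'.
Proof.
move=> [[symI symV symphi] [symmetries [psdIpV psdImV psdIpVphi trace1 channel]]].
case: (coefs) => coefI coefVphi /andP[be_ge0 le_be_al].
have al_ge0 : 0 <= al := le_trans be_ge0 le_be_al.
rewrite /PI' /PV' /Pphi'.
split; first by rewrite !trmx_mix3 symI symV symphi.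
split; first exact: mix3_symmetries symmetries.
split.
- rewrite mix3D; apply: (@psd_combination _ _ k) => //; first by rewrite mulr_ge0.
  have le_2be : 2 * be <= al + be by rewrite mulr_natl mulr2n lerD2r.
  rewrite ler_pdivrMr //.
  exact: le_trans le_2be (ler_peMr (addr_ge0 al_ge0 be_ge0) k_ge1).
- by rewrite mix3B; apply: psdZ; rewrite ?subr_ge0.
- rewrite mix3_sum_scaled_last coefI coefVphi expr2 mulrAC.
  rewrite -[(k / k' * k) *: _]scalerA -scalerDr.
  by apply: psdZ => //; apply: divr_ge0; apply: ltW.
- by rewrite -trace1 -!mxtraceZ -!mxtraceD lift_scaled_sum.
- by rewrite lift_weighted_sum !linearZ /= channel.
Qed.

End Lifting.

Theorem mainTheorem13 (R : realType) (n m : nat) (hn : (0 < n)%N) (hm : (0 < m)%N)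
  (L : {linear 'M[R]_n -> 'M[R]_m}) (Y : 'M[R]_m) (k : R)
  (PI PV Pphi : 'M[R]_(n * n)) :
  1 <= k -> kfeasible L Y k PI PV Pphi ->
  forall k' : R, k <= k' ->
  exists PI' PV' Pphi' : 'M[R]_(n * n),
    kfeasible L Y k' PI' PV' Pphi' /\
    k' ^+ 2 *: PI' + k' *: PV' + k' *: Pphi' = k ^+ 2 *: PI + k *: PV + k *: Pphi.
Proof.
move=> k_ge1 feasible k' le_kk'.
have [al [be coefs]] := lift_coefficients_exist k_ge1 le_kk'.
exists (mix3 al be PI PV Pphi), (mix3 al be PV PI Pphi), (mix3 al be Pphi PI PV).
split; first exact: kfeasible_lift k_ge1 le_kk' coefs feasible.
exact: lift_scaled_sum k_ge1 le_kk' coefs.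
Qed.
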